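(* Let $n\ge2$ be an integer and let $\Gamma(0;n)$ be the group of automorphisms of the Farey tessellation generated by the reflections in all Farey edges having $\infty$ as an endpoint (i.e. the maps $z\mapsto 2k-\bar z$, $k\in\mathbb{Z}$) together with the parabolic transformation $z\mapsto z/(2nz+1)$ centered at $0$ (translation by $2n$ units around the vertex $0$). Then for every $s\in\mathbb{Q}\cup\{\infty\}$ there is a unique $s_0\in([1/n,1]\cap\mathbb{Q})\cup\{\infty,0\}$ such that $s$ lies in the $\Gamma(0;n)$-orbit of $s_0$.
   Context: The Farey tessellation of the upper half plane $\mathbb{H}^2$ is the ideal triangulation whose vertices are $\mathbb{Q}\cup\{\infty\}$, with $p/q$ and $r/s$ (in lowest terms, $\infty=1/0$) joined by a geodesic edge iff $|ps-qr|=1$. $\Gamma(0;n)$ acts on $\partial\mathbb{H}^2=\mathbb{R}\cup\{\infty\}$ and preserves $\mathbb{Q}\cup\{\infty\}$. *)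

From HB Require Import structures.
From mathcomp Require Import all_boot all_order all_algebra.
Set Implicit Arguments. Unset Strict Implicit. Unset Printing Implicit Defensive.
Import Order.TTheory GRing.Theory Num.Theory.
Local Open Scope ring_scope.

(* Points of Q ∪ {∞} (the vertices of the Farey tessellation):
   [None] is ∞ = 1/0, [Some q] is the rational q. *)
Definition qpoint := option rat.

(* Reflection in the Farey edge from ∞ to k: z |-> 2k - conj z,
   restricted to the boundary Q ∪ {∞}; it fixes ∞. *)
Definition refl_edge (k : int) (x : qpoint) : qpoint :=
  match x with
  | Some q => Some (2 * k%:~R - q)
  | None => None
  end.

Definition parab (n : nat) (x : qpoint) : qpoint :=
  match x with
  | Some q => if 2 * n%:R * q + 1 == 0 then None
              else Some (q / (2 * n%:R * q + 1))
  | None => Some (1 / (2 * n%:R))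
  end.

Definition parab_inv (n : nat) (x : qpoint) : qpoint :=
  match x with
  | Some q => if 1 - 2 * n%:R * q == 0 then None
              else Some (q / (1 - 2 * n%:R * q))
  | None => Some (- (1 / (2 * n%:R)))
  end.

(* One application of a generator of Γ(0;n) or of the inverse of a generator
   (the reflections are involutions). *)
Definition gen_step (n : nat) (x y : qpoint) : Prop :=
  (exists k : int, y = refl_edge k x) \/ y = parab n x \/ y = parab_inv n x.

Inductive gamma_orbit (n : nat) (x : qpoint) : qpoint -> Prop :=
  | orbit_refl : gamma_orbit n x x
  | orbit_step : forall y z, gamma_orbit n x y -> gen_step n y z -> gamma_orbit n x z.

Definition fund_set (n : nat) (x : qpoint) : Prop :=
  match x with
  | None => True
  | Some q => q = 0 \/ (1 / n%:R <= q /\ q <= 1)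
  end.

From HB Require Import structures.
From mathcomp Require Import all_boot all_order all_algebra.
From mathcomp Require Import zify ring lra.
Set Implicit Arguments. Unset Strict Implicit. Unset Printing Implicit Defensive.
Import Order.TTheory GRing.Theory Num.Theory.
Local Open Scope ring_scope.

(* The involution z |-> 1/(nz) swaps 0 and ∞ and conjugates the group generated
   by the reflections in the edges at ∞ (acting on Q as x |-> ±x + 2k, with
   fundamental domain [0,1] ∪ {∞}) into a subgroup fixing 0 that contains the
   parabolic (which becomes x |-> x + 2).  These two groups generate Γ(0;n), and
   their fundamental domains meet exactly in ([1/n,1] ∩ Q) ∪ {∞, 0}.  Folding a
   nonnegative point alternately into the two domains strictly lowers
   2 * denominator + [q > 1] until both constraints hold, which gives existence.
   For uniqueness, the result of this reduction applied to |s| is invariant under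
   both groups: each fold is constant on orbits, and on nonnegative points the
   reduction does not distinguish a point from its fold. *)

Lemma denq_le_int_mul (r : rat) (K z : int) :
  0 < K -> r * K%:~R = z%:~R -> denq r <= K.
Proof.
move=> K_gt0 rK.
have den_dvd : (denq r %| numq r * K)%Z.
  have -> : numq r * K = z * denq r.
    by apply: (@intr_inj rat); rewrite !rmorphM /= numqE -rK; ring.
  exact: dvdz_mull (dvdzz _).
rewrite Gauss_dvdzr in den_dvd; last by rewrite coprimez_sym coprimezE coprime_num_den.
have := dvdn_leq _ den_dvd; have := denq_gt0 r; lia.
Qed.

(* The nearest even integer to [q] is [2 m] with [m = floor ((q + 1) / 2)]. *)
Definition dist_even (q : rat) : rat := `|q - 2 * (Num.floor ((q + 1) / 2))%:~R|.

Lemma dist_even_ge0_le1 q : 0 <= dist_even q <= 1.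
Proof.
rewrite /dist_even normr_ge0 ler_norml.
have := floor_le ((q + 1) / 2); have := floorD1_gt ((q + 1) / 2).
rewrite rmorphD /= => ? ?; apply/andP; split; lra.
Qed.

Lemma dist_evenE q :
  exists k : int, dist_even q = 2 * k%:~R + q \/ dist_even q = 2 * k%:~R - q.
Proof.
rewrite /dist_even; set m := Num.floor _.
have [q_ge|q_lt] := lerP 0 (q - 2 * m%:~R).
- by exists (- m); left; rewrite ger0_norm // rmorphN /=; ring.
- by exists m; right; rewrite ltr0_norm //; ring.
Qed.

Lemma denq_dist_even q : denq (dist_even q) <= denq q.
Proof.
apply: (@denq_le_int_mul _ _ (`|numq q - 2 * Num.floor ((q + 1) / 2) * denq q|)).
  exact: denq_gt0.
have D_gt0 : (0 : rat) < (denq q)%:~R by rewrite ltr0z denq_gt0.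
rewrite intr_norm rmorphB !rmorphM /= numqE /dist_even.
set m := Num.floor _; set D := (denq q)%:~R.
rewrite [in RHS](_ : _ - _ = (q - 2 * m%:~R) * D); last by ring.
by rewrite normrM (gtr0_norm D_gt0).
Qed.

Lemma pm_even_unit_eq (p q : rat) (k : int) : 0 <= p <= 1 -> 0 <= q <= 1 ->
  q = 2 * k%:~R + p \/ q = 2 * k%:~R - p -> p = q.
Proof.
move=> /andP[p_ge0 p_le1] /andP[q_ge0 q_le1] pq.
have k_ge : -1 <= 2 * k by rewrite -(ler_int rat) rmorphM /=; case: pq; lra.
have k_le : 2 * k <= 2 by rewrite -(ler_int rat) rmorphM /=; case: pq; lra.
move: pq; have [->|->] : k = 0 \/ k = 1 by lia.
all: by rewrite ?mulr0z ?mulr1z => -[]; lra.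
Qed.

(* The orbit relation of the stabiliser of [∞], generated by the reflections
   [refl_edge k]: it acts on [Q] as the maps [x |-> ±x + 2k]. *)
Definition equiv_inf (x y : qpoint) : Prop :=
  match x, y with
  | None, None => True
  | Some p, Some q => exists k : int, q = 2 * k%:~R + p \/ q = 2 * k%:~R - p
  | _, _ => False
  end.

Definition cell_inf (x : qpoint) : bool :=
  if x is Some q then 0 <= q <= 1 else true.

Definition fold_inf (x : qpoint) : qpoint :=
  if x is Some q then Some (dist_even q) else None.

Definition absq (x : qpoint) : qpoint :=
  if x is Some q then Some `|q| else None.

Lemma equiv_inf_refl x : equiv_inf x x.
Proof. by case: x => [q|] //=; exists 0; left; rewrite mulr0z mulr0 add0r. Qed.

Lemma equiv_inf_sym x y : equiv_inf x y -> equiv_inf y x.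
Proof.
case: x y => [p|] [q|] //= [k [->|->]].
- by exists (- k); left; rewrite rmorphN /=; ring.
- by exists k; right; ring.
Qed.

Lemma equiv_inf_trans x y z : equiv_inf x y -> equiv_inf y z -> equiv_inf x z.
Proof.
case: x y z => [p|] [q|] [r|] //= [k pq] [l qr].
case: pq qr => -> [->|->].
- by exists (l + k); left; rewrite rmorphD /=; ring.
- by exists (l - k); right; rewrite rmorphB /=; ring.
- by exists (l + k); right; rewrite rmorphD /=; ring.
- by exists (l - k); left; rewrite rmorphB /=; ring.
Qed.

Lemma equiv_fold_inf x : equiv_inf x (fold_inf x).
Proof. by case: x => [q|] //=; apply: dist_evenE. Qed.

Lemma cell_fold_inf x : cell_inf (fold_inf x).
Proof. by case: x => [q|] //=; apply: dist_even_ge0_le1. Qed.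

Lemma cell_equiv_inf_eq x y : cell_inf x -> cell_inf y -> equiv_inf x y -> x = y.
Proof.
case: x y => [p|] [q|] //= p01 q01 [k pq].
by rewrite (pm_even_unit_eq p01 q01 pq).
Qed.

Lemma fold_inf_eq x y : equiv_inf x y -> fold_inf x = fold_inf y.
Proof.
move=> xy; apply: cell_equiv_inf_eq; rewrite ?cell_fold_inf //.
apply: equiv_inf_trans (equiv_inf_sym (equiv_fold_inf x)) _.
exact: equiv_inf_trans xy (equiv_fold_inf y).
Qed.

Lemma fold_inf_id x : cell_inf x -> fold_inf x = x.
Proof.
move=> x01; apply: cell_equiv_inf_eq x01 _; first exact: cell_fold_inf.
exact: equiv_inf_sym (equiv_fold_inf x).
Qed.

Lemma equiv_absq x : equiv_inf x (absq x).
Proof.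
case: x => [q|] //=; exists 0; rewrite mulr0z mulr0 add0r sub0r.
by have [q_ge0|q_lt0] := lerP 0 q; [left; rewrite ger0_norm | right; rewrite ltr0_norm].
Qed.

Section Farey.
Variable n : nat.
Hypothesis n_gt0 : (0 < n)%N.

Let nR_gt0 : (0 : rat) < n%:R. Proof. by rewrite ltr0n. Qed.
Let nR_neq0 : (n%:R : rat) != 0. Proof. by rewrite gt_eqF. Qed.

Definition inv_scale (x : qpoint) : qpoint :=
  match x with
  | None => Some 0
  | Some q => if q == 0 then None else Some (n%:R * q)^-1
  end.

Definition equiv_zero (x y : qpoint) : Prop := equiv_inf (inv_scale x) (inv_scale y).
Definition cell_zero (x : qpoint) : bool := cell_inf (inv_scale x).
Definition fold_zero (x : qpoint) : qpoint := inv_scale (fold_inf (inv_scale x)).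

Lemma inv_scaleK : involutive inv_scale.
Proof.
case=> [q|] //=; have [->|q_neq0] := eqVneq q 0 => //=.
rewrite invr_eq0 mulf_eq0 (negbTE nR_neq0) (negbTE q_neq0).
by congr Some; field; rewrite nR_neq0 q_neq0.
Qed.

Lemma inv_scale_absq x : inv_scale (absq x) = absq (inv_scale x).
Proof.
case: x => [q|] //=; rewrite normr_eq0; case: eqP => //= _.
by rewrite normfV normrM ger0_norm // ltW.
Qed.

Lemma inv_scale_opp p : inv_scale (Some (- p)) = refl_edge 0 (inv_scale (Some p)).
Proof.
rewrite /= oppr_eq0; case: eqP => //= _.
by rewrite mulr0z mulr0 sub0r mulrN invrN.
Qed.

Lemma parab_inv_scale w : parab n (inv_scale (Some w)) = inv_scale (Some (w + 2)).
Proof.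
have [->|w_neq0] := eqVneq w 0; rewrite /=.
  by congr Some; field.
rewrite (negbTE w_neq0) /= (_ : 2 * n%:R * _ + 1 = (w + 2) / w); last first.
  by field; rewrite nR_neq0 w_neq0.
rewrite mulf_eq0 invr_eq0 (negbTE w_neq0) orbF.
by case: eqP => // /eqP w2_neq0; congr Some; field; rewrite nR_neq0 w_neq0 w2_neq0.
Qed.

Lemma parab_inv_inv_scale w : parab_inv n (inv_scale (Some w)) = inv_scale (Some (w - 2)).
Proof.
have [->|w_neq0] := eqVneq w 0; rewrite /=.
  by congr Some; field.
rewrite (negbTE w_neq0) /= (_ : 1 - 2 * n%:R * _ = (w - 2) / w); last first.
  by field; rewrite nR_neq0 w_neq0.
rewrite mulf_eq0 invr_eq0 (negbTE w_neq0) orbF.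
by case: eqP => // /eqP w2_neq0; congr Some; field; rewrite nR_neq0 w_neq0 w2_neq0.
Qed.

Lemma equiv_zero_sym x y : equiv_zero x y -> equiv_zero y x.
Proof. exact: equiv_inf_sym. Qed.

Lemma equiv_fold_zero x : equiv_zero x (fold_zero x).
Proof. by rewrite /equiv_zero /fold_zero inv_scaleK; apply: equiv_fold_inf. Qed.

Lemma cell_fold_zero x : cell_zero (fold_zero x).
Proof. by rewrite /cell_zero /fold_zero inv_scaleK; apply: cell_fold_inf. Qed.

Lemma fold_zero_eq x y : equiv_zero x y -> fold_zero x = fold_zero y.
Proof. by move=> /fold_inf_eq; rewrite /fold_zero => ->. Qed.

Lemma fold_zero_id x : cell_zero x -> fold_zero x = x.
Proof. by move=> /fold_inf_id; rewrite /fold_zero => ->; apply: inv_scaleK. Qed.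

Lemma equiv_zero_absq x : equiv_zero x (absq x).
Proof. by rewrite /equiv_zero inv_scale_absq; apply: equiv_absq. Qed.

Lemma cell_zero_Some q : cell_zero (Some q) = (q == 0) || (1 <= n%:R * q).
Proof.
rewrite /cell_zero /=; case: eqP => //= /eqP q_neq0.
rewrite invr_ge0; have [nq_gt0|nq_le0] := ltrP 0 (n%:R * q).
  by rewrite ltW // invf_le1.
have nq_lt0 : n%:R * q < 0 by rewrite lt_neqAle mulf_neq0.
by rewrite !leNgt nq_lt0 (lt_trans nq_lt0 ltr01).
Qed.

Lemma gamma_orbit_trans x y z :
  gamma_orbit n x y -> gamma_orbit n y z -> gamma_orbit n x z.
Proof. by move=> xy; elim=> // y' z' _ xy' /(orbit_step xy'). Qed.

Lemma gamma_orbit_gen x y : gen_step n x y -> gamma_orbit n x y.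
Proof. exact: orbit_step (orbit_refl n x). Qed.

Lemma gamma_orbit_equiv_inf x y : equiv_inf x y -> gamma_orbit n x y.
Proof.
case: x y => [p|] [q|] //= => [[k [->|->]]|_]; last exact: orbit_refl.
- apply: (@gamma_orbit_trans _ (Some (- p))).
    by apply: gamma_orbit_gen; left; exists 0; rewrite /= mulr0z mulr0 sub0r.
  by apply: gamma_orbit_gen; left; exists k; rewrite /= opprK.
- by apply: gamma_orbit_gen; left; exists k.
Qed.

Lemma gamma_orbit_shift (k : int) p :
  gamma_orbit n (inv_scale (Some p)) (inv_scale (Some (2 * k%:~R + p))).
Proof.
have up m : gamma_orbit n (inv_scale (Some p)) (inv_scale (Some (p + 2 * m%:R))).
  elim: m => [|m IH]; first by rewrite mulr0 addr0; apply: orbit_refl.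
  apply: orbit_step IH _; right; left.
  by rewrite parab_inv_scale -addrA -[m.+1]addn1 natrD mulrDr mulr1.
have down m : gamma_orbit n (inv_scale (Some p)) (inv_scale (Some (p - 2 * m%:R))).
  elim: m => [|m IH]; first by rewrite mulr0 subr0; apply: orbit_refl.
  apply: orbit_step IH _; right; right.
  by rewrite parab_inv_inv_scale -addrA -opprD -[m.+1]addn1 natrD mulrDr mulr1.
case: k => m; first by rewrite addrC pmulrn; apply: up.
by rewrite NegzE mulrNz mulrN addrC; apply: down.
Qed.

Lemma gamma_orbit_equiv_zero x y : equiv_zero x y -> gamma_orbit n x y.
Proof.
rewrite /equiv_zero -{2}[x]inv_scaleK -{2}[y]inv_scaleK.
case: (inv_scale x) (inv_scale y) => [p|] [q|] //= => [[k [->|->]]|_].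
- exact: gamma_orbit_shift.
- apply: (@gamma_orbit_trans _ (inv_scale (Some (- p)))).
    by apply: gamma_orbit_gen; left; exists 0; rewrite inv_scale_opp.
  exact: gamma_orbit_shift.
- exact: orbit_refl.
Qed.

Lemma gen_step_equiv x y : gen_step n x y -> equiv_inf x y \/ equiv_zero x y.
Proof.
case=> [[k ->]|[->|->]].
- by left; case: x => [p|] //=; exists k; right.
- right; rewrite -[x]inv_scaleK; case: (inv_scale x) => [w|].
    by rewrite parab_inv_scale /equiv_zero !inv_scaleK; exists 1; left; rewrite addrC.
  by rewrite /= mulr0 add0r oner_eq0 mul0r; apply: equiv_inf_refl.
- right; rewrite -[x]inv_scaleK; case: (inv_scale x) => [w|].
    rewrite parab_inv_inv_scale /equiv_zero !inv_scaleK.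
    by exists (-1); left; rewrite addrC.
  by rewrite /= mulr0 subr0 oner_eq0 mul0r; apply: equiv_inf_refl.
Qed.

Definition nonneg (x : qpoint) : bool := if x is Some q then 0 <= q else true.

(* [fold_inf] may keep the denominator of a point [q > 1] but moves it into
   [0, 1]; [fold_zero] strictly lowers the denominator. *)
Definition height (x : qpoint) : nat :=
  if x is Some q then (2 * `|denq q| + (1 < q)%R)%N else 0%N.

Lemma cell_inf_nonneg x : cell_inf x -> nonneg x.
Proof. by case: x => [q|] //= /andP[]. Qed.

Lemma cell_zero_nonneg x : cell_zero x -> nonneg x.
Proof.
case: x => [q|] //; rewrite cell_zero_Some /= => /orP[/eqP -> //|nq_ge1].
by rewrite -(pmulr_rge0 _ nR_gt0); lra.
Qed.

Lemma nonneg_cell x : nonneg x -> cell_inf x || cell_zero x.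
Proof.
case: x => [q|] //= q_ge0; rewrite cell_zero_Some q_ge0 /=.
have [//|q_gt1] := lerP q 1; have : (1 : rat) <= n%:R by rewrite ler1n.
by rewrite orbC => ?; apply/orP; left; nra.
Qed.

Lemma absq_id x : nonneg x -> absq x = x.
Proof. by case: x => [q|] //= q_ge0; rewrite ger0_norm. Qed.

Lemma nonneg_absq x : nonneg (absq x).
Proof. by case: x => [q|] //=; rewrite normr_ge0. Qed.

Lemma fund_setE x : fund_set n x <-> cell_inf x && cell_zero x.
Proof.
case: x => [q|] //=; rewrite cell_zero_Some ler_pdivrMr // [q * _]mulrC.
have [-> /=|q_neq0] := eqVneq q 0; first by split=> // _; left.
split=> [[q0|[nq_ge1 q_le1]]|/andP[/andP[_ q_le1] nq_ge1]]; last by right.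
  by move/eqP: q_neq0.
by rewrite /= nq_ge1 q_le1 !andbT -(pmulr_rge0 _ nR_gt0); lra.
Qed.

Lemma height_fold_inf x : nonneg x -> ~~ cell_inf x ->
  (height (fold_inf x) < height x)%N.
Proof.
case: x => [q|] //= q_ge0; rewrite q_ge0 /= -ltNge => q_gt1.
have /andP[_ t_le1] := dist_even_ge0_le1 q.
rewrite q_gt1 ltNge t_le1 /=.
have := denq_dist_even q; have := absz_denq q; have := absz_denq (dist_even q); lia.
Qed.

Lemma denq_fold_zero_lt q : 0 < q -> n%:R * q < 1 ->
  let t := dist_even (n%:R * q)^-1 in t != 0 -> denq (n%:R * t)^-1 < denq q.
Proof.
move=> q_gt0 nq_lt1 t t_neq0.
have /andP[t_ge0 t_le1] : 0 <= t <= 1 by apply: dist_even_ge0_le1.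
set p := numq q; set D := denq q.
have pE : p%:~R = q * D%:~R by rewrite numqE.
have D_gt0 : (0 : rat) < D%:~R by rewrite ltr0z denq_gt0.
have q_neq0 : q != 0 by rewrite gt_eqF.
have [Z ZE] : exists Z : int, Z%:~R = n%:R * t * p%:~R.
  have [k [tE|tE]] := dist_evenE (n%:R * q)^-1; rewrite -/t in tE.
  - exists (2 * k * n%:R * p + D); rewrite rmorphD !rmorphM /= tE pE.
    by field; rewrite nR_neq0 q_neq0.
  - exists (2 * k * n%:R * p - D); rewrite rmorphB !rmorphM /= tE pE.
    by field; rewrite nR_neq0 q_neq0.
have Z_gt0 : 0 < Z.
  by rewrite -(ltr0z rat) ZE pE !mulr_gt0 // lt_def t_neq0 t_ge0.
apply: (@le_lt_trans _ _ Z); first apply: (denq_le_int_mul Z_gt0 (_ : _ = p%:~R)).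
  by rewrite ZE; field; rewrite nR_neq0 t_neq0.
have nqD_lt : n%:R * q * D%:~R < D%:~R by rewrite -[X in _ < X]mul1r ltr_pM2r.
have nqD_ge0 : 0 <= n%:R * q * D%:~R by rewrite !mulr_ge0 // ltW.
rewrite -(ltr_int rat) ZE pE (_ : _ * _ = t * (n%:R * q * D%:~R)); last by ring.
exact: le_lt_trans (ler_piMl nqD_ge0 t_le1) nqD_lt.
Qed.

Lemma height_fold_zero x : cell_inf x -> ~~ cell_zero x ->
  (height (fold_zero x) < height x)%N.
Proof.
case: x => [q|] //=; rewrite cell_zero_Some negb_or -ltNge.
move=> /andP[q_ge0 q_le1] /andP[q_neq0 nq_lt1].
have q_gt0 : 0 < q by rewrite lt_def q_neq0.
rewrite /fold_zero /= (negbTE q_neq0) /= ltNge q_le1 /=.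
case: eqP => [_|/eqP t_neq0] /=; first by have := denq_gt0 q; have := absz_denq q; lia.
have := denq_fold_zero_lt q_gt0 nq_lt1 t_neq0; set r := (n%:R * _)^-1.
have := absz_denq q; have := absz_denq r; have := leq_b1 (1 < r)%R; lia.
Qed.

Definition reduce_step (x : qpoint) : qpoint :=
  if cell_inf x then fold_zero x else fold_inf x.

Definition reduce (x : qpoint) : qpoint := iter (height x) reduce_step x.

Definition normal_form (x : qpoint) : qpoint := reduce (absq x).

Lemma reduce_step_id x : cell_inf x && cell_zero x -> reduce_step x = x.
Proof. by case/andP=> x_inf x_zero; rewrite /reduce_step x_inf fold_zero_id. Qed.

Lemma nonneg_reduce_step x : nonneg (reduce_step x).
Proof.
rewrite /reduce_step; case: ifP => _.
- exact/cell_zero_nonneg/cell_fold_zero.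
- exact/cell_inf_nonneg/cell_fold_inf.
Qed.

Lemma height_reduce_step x : nonneg x -> ~~ (cell_inf x && cell_zero x) ->
  (height (reduce_step x) < height x)%N.
Proof.
rewrite /reduce_step; case: ifP => [x_inf|x_inf] x_ge0.
- by rewrite andTb; apply: height_fold_zero.
- by move=> _; apply: height_fold_inf; rewrite ?x_inf.
Qed.

Lemma iter_reduce_step_fund m x : nonneg x -> (height x <= m)%N ->
  cell_inf (iter m reduce_step x) && cell_zero (iter m reduce_step x).
Proof.
elim: m x => [|m IH] x x_ge0 hx.
  by case: x hx x_ge0 => [q|] //=; have := denq_gt0 q; have := absz_denq q; lia.
rewrite iterSr; have [x_fund|x_nfund] := boolP (cell_inf x && cell_zero x).
  by rewrite !iter_fix ?reduce_step_id.
apply: IH; first exact: nonneg_reduce_step.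
by have := height_reduce_step x_ge0 x_nfund; lia.
Qed.

Lemma iter_reduce_step m x : nonneg x -> (height x <= m)%N ->
  iter m reduce_step x = reduce x.
Proof.
move=> x_ge0 hx; rewrite /reduce -(subnK hx) iterD iter_fix //.
exact/reduce_step_id/iter_reduce_step_fund.
Qed.

Lemma reduce_reduce_step x : nonneg x -> reduce (reduce_step x) = reduce x.
Proof.
move=> x_ge0; have hx : (height (reduce_step x) <= height x)%N.
  have [/reduce_step_id -> //|x_nfund] := boolP (cell_inf x && cell_zero x).
  exact/ltnW/height_reduce_step.
rewrite -(iter_reduce_step (nonneg_reduce_step x) hx) -iterSr.
exact: iter_reduce_step.
Qed.

Lemma reduce_fold_inf x : nonneg x -> reduce (fold_inf x) = reduce x.
Proof.
move=> x_ge0; have [/fold_inf_id -> //|x_ninf] := boolP (cell_inf x).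
by rewrite -[RHS]reduce_reduce_step // /reduce_step (negbTE x_ninf).
Qed.

Lemma reduce_fold_zero x : nonneg x -> reduce (fold_zero x) = reduce x.
Proof.
move=> x_ge0; have [/fold_zero_id -> //|x_nzero] := boolP (cell_zero x).
have x_inf : cell_inf x by have := nonneg_cell x_ge0; rewrite (negbTE x_nzero) orbF.
by rewrite -[RHS]reduce_reduce_step // /reduce_step x_inf.
Qed.

Lemma normal_form_equiv_inf x y : equiv_inf x y -> normal_form x = normal_form y.
Proof.
move=> xy; rewrite /normal_form -[LHS]reduce_fold_inf ?nonneg_absq //.
rewrite -[RHS]reduce_fold_inf ?nonneg_absq //.
by rewrite -(fold_inf_eq (equiv_absq x)) -(fold_inf_eq (equiv_absq y)) (fold_inf_eq xy).
Qed.

Lemma normal_form_equiv_zero x y : equiv_zero x y -> normal_form x = normal_form y.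
Proof.
move=> xy; rewrite /normal_form -[LHS]reduce_fold_zero ?nonneg_absq //.
rewrite -[RHS]reduce_fold_zero ?nonneg_absq //.
rewrite -(fold_zero_eq (equiv_zero_absq x)) -(fold_zero_eq (equiv_zero_absq y)).
by rewrite (fold_zero_eq xy).
Qed.

Lemma normal_form_orbit x y : gamma_orbit n x y -> normal_form x = normal_form y.
Proof.
elim=> // y' z' _ -> /gen_step_equiv[].
- exact: normal_form_equiv_inf.
- exact: normal_form_equiv_zero.
Qed.

Lemma normal_form_id x : fund_set n x -> normal_form x = x.
Proof.
move=> /fund_setE x_fund; have x_ge0 := cell_inf_nonneg (proj1 (andP x_fund)).
by rewrite /normal_form absq_id // /reduce iter_fix ?reduce_step_id.
Qed.

Lemma fund_normal_form x : fund_set n (normal_form x).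
Proof. exact/fund_setE/iter_reduce_step_fund/leqnn/nonneg_absq. Qed.

Lemma gamma_orbit_normal_form x : gamma_orbit n (normal_form x) x.
Proof.
apply: (@gamma_orbit_trans _ (absq x)); last first.
  exact/gamma_orbit_equiv_inf/equiv_inf_sym/equiv_absq.
rewrite /normal_form /reduce; elim: (height _) => [|m IH]; first exact: orbit_refl.
apply: gamma_orbit_trans IH; rewrite iterS /reduce_step; case: ifP => _.
- exact/gamma_orbit_equiv_zero/equiv_zero_sym/equiv_fold_zero.
- exact/gamma_orbit_equiv_inf/equiv_inf_sym/equiv_fold_inf.
Qed.

End Farey.

Theorem theorem2p1 (n : nat) (hn : (2 <= n)%N) (s : qpoint) :
  exists! s0 : qpoint, (fund_set n s0 /\ gamma_orbit n s0 s).
Proof.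
have n_gt0 : (0 < n)%N by apply: leq_trans hn.
exists (normal_form n s); split.
  by split; [apply: fund_normal_form | apply: gamma_orbit_normal_form].
move=> s0 [s0_fund s0_s].
by rewrite -(normal_form_orbit n_gt0 s0_s) normal_form_id.
Qed.
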